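(* Let $p(z,w)=(z-w)^2$. For every $n\ge 0$ and every $k=0,1,\dots,n$, \[ A^n_{n,k}=-\frac{(n+2)(n+3)}{12}\,(k+1)(k+2)(k-n-1). \]
   Context: For a homogeneous polynomial $p(z,w)$ and $n\ge 0$, let $A^n=(a_{i,j})_{i,j=0}^n$ be the $(n+1)\times(n+1)$ matrix with $a_{i,j}=\langle p w^{i-j},p z^{i-j}\rangle$ for $i\ge j$ and $a_{i,j}=\overline{\langle p w^{j-i},p z^{j-i}\rangle}$ for $i<j$, the inner product being that of the Hardy space $H^2(\mathbb D^2)$ (in which the monomials $z^aw^b$ are orthonormal). Let $A^n_{i,j}$ denote the $(i,j)$ cofactor of $A^n$, i.e. $(-1)^{i+j}$ times the determinant of the matrix obtained from $A^n$ by deleting row $i$ and column $j$ (rows and columns indexed $0,\dots,n$; for $n=0$, $A^0_{0,0}=1$). For $p=(z-w)^2$, $A^n$ is the symmetric pentadiagonal Toeplitz matrix with diagonal entries $6$, first off-diagonal entries $-4$, second off-diagonal entries $1$, and all other entries $0$. *)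

From HB Require Import structures.
From mathcomp Require Import all_boot all_order all_algebra all_field.
From mathcomp Require Import mpoly.
Set Implicit Arguments. Unset Strict Implicit. Unset Printing Implicit Defensive.
Import Order.TTheory GRing.Theory Num.Theory.
Local Open Scope ring_scope.

Notation cpoly2 := {mpoly algC[2]}.

Definition zvar : cpoly2 := 'X_(0 : 'I_2).
Definition wvar : cpoly2 := 'X_(1 : 'I_2).

(* Hardy space H^2(D^2) inner product on polynomials: monomials orthonormal,
   linear in the first argument, conjugate-linear in the second. *)
Definition hardy_ip (f g : cpoly2) : algC :=
  \sum_(m <- msupp f) f@_m * (g@_m)^*.

Definition Amat (p : cpoly2) (n : nat) : 'M[algC]_(n.+1) :=
  \matrix_(i < n.+1, j < n.+1)
    if (j <= i)%N then hardy_ip (p * wvar ^+ (i - j)) (p * zvar ^+ (i - j))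
    else (hardy_ip (p * wvar ^+ (j - i)) (p * zvar ^+ (j - i)))^*.

Definition psq : cpoly2 := (zvar - wvar) ^+ 2.

From HB Require Import structures.
From mathcomp Require Import all_boot all_order all_algebra all_field.
From mathcomp Require Import mpoly.
From mathcomp Require Import ring zify.
Import GRing.Theory Num.Theory.
Local Open Scope ring_scope.

(* Write [c_j] for the cofactors of the last row of [A^(n+1)] and [D_n] for
   [det A^n].  By the adjugate identity, [c] is killed by every row of
   [A^(n+1)] but the last, and [c_(n+1) = D_n]; as the leading block [A^n] is
   invertible (inductively [D_n != 0]), these conditions determine [c].  The
   band [1, -4, 6, -4, 1] is the fourth difference operator, which annihilates
   cubics, so the cubic with roots [-1], [-2], [n+2] appearing in the theorem
   satisfies the same conditions once normalized to take the value [D_n] at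
   [n+1].  Expanding along the last row then gives
   [D_(n+1) = (n+3)(n+4)^2(n+5)/12], closing the induction. *)

Section LastRowCofactors.

Variables (R : comUnitRingType) (n : nat) (A : 'M[R]_n.+2) (v : 'I_n.+2 -> R).
Hypothesis minor_unit : row' ord_max (col' ord_max A) \in unitmx.
Hypothesis v_kernel :
  forall i : 'I_n.+1, \sum_j A (widen_ord (leqnSn _) i) j * v j = 0.
Hypothesis v_last : v ord_max = \det (row' ord_max (col' ord_max A)).

Lemma cofactor_last_row_eq j : cofactor A ord_max j = v j.
Proof.
pose d j := cofactor A ord_max j - v j.
have lift_widen (i : 'I_n.+1) : lift ord_max i = widen_ord (leqnSn _) i.
  by apply: val_inj; exact: lift_max.
have d_last : d ord_max = 0.
  by rewrite /d /cofactor addnn -mul2n exprM sqrrN !expr1n mul1r v_last subrr.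
have d_kernel (i : 'I_n.+1) : \sum_j A (widen_ord (leqnSn _) i) j * d j = 0.
  have := congr1 (fun M : 'M[R]_n.+2 => M (widen_ord (leqnSn _) i) ord_max) (mul_mx_adj A).
  have i_neq_max : widen_ord (leqnSn _) i != ord_max.
    by rewrite -val_eqE /= neq_ltn ltn_ord.
  rewrite !mxE (negbTE i_neq_max) mulr0n => adj_col.
  under eq_bigr do rewrite mulrBr.
  rewrite sumrB v_kernel subr0 -[RHS]adj_col.
  by apply: eq_bigr => k _; rewrite mxE.
have minor_d : row' ord_max (col' ord_max A) *m \col_j d (lift ord_max j) = 0.
  apply/matrixP => i k.
  rewrite !mxE -[RHS](d_kernel i) [RHS]big_ord_recr /= d_last mulr0 addr0.
  by apply: eq_bigr => l _; rewrite !mxE !lift_widen.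
have d_top : \col_j d (lift ord_max j) = 0.
  by rewrite -(mulKmx minor_unit (\col_j d (lift ord_max j))) minor_d mulmx0.
apply/eqP; rewrite -subr_eq0 -/(d j).
case: (unliftP ord_max j) => [j'|] ->; last by rewrite d_last.
by have := congr1 (fun M : 'cV[R]_n.+1 => M j' 0) d_top; rewrite !mxE => ->.
Qed.

End LastRowCofactors.

Definition zw_mnm (a b : nat) : 'X_{1..2} :=
  [multinom (if i == 0 :> nat then a else b) | i < 2].

Lemma zvarX_wvarX a b : zvar ^+ a * wvar ^+ b = 'X_[zw_mnm a b].
Proof.
rewrite /zvar /wvar !mpolyXn -mpolyXD; congr mpolyX; apply/mnmP => i.
rewrite mnmDE !mulmnE !mnm1E mnmE.
by case: i => [[|[|]]] //= _; rewrite ?mul1n ?mul0n ?addn0.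
Qed.

Lemma zw_mnm_eq a b c d : (zw_mnm a b == zw_mnm c d) = (a == c) && (b == d).
Proof.
apply/eqP/andP => [/mnmP eq_ab_cd|[/eqP -> /eqP ->]] //.
by have := eq_ab_cd 0; have := eq_ab_cd 1; rewrite !mnmE /= => -> ->.
Qed.

Lemma hardy_ip_seq f g s : uniq s -> {subset msupp f <= s} ->
  hardy_ip f g = \sum_(m <- s) f@_m * (g@_m)^*.
Proof.
move=> s_uniq supp_s; rewrite /hardy_ip [RHS](bigID (mem (msupp f))) /=.
rewrite [X in _ = _ + X]big1 ?addr0 => [|m]; last first.
  by rewrite mcoeff_msupp negbK => /eqP ->; rewrite mul0r.
rewrite -[RHS]big_filter; apply: perm_big; apply: uniq_perm.
- exact: msupp_uniq.
- exact: filter_uniq.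
by move=> m; rewrite mem_filter andb_idr //; apply: supp_s.
Qed.

Definition psq_band (d : nat) : algC :=
  match d with 0 => 6 | 1 => -4 | 2 => 1 | _ => 0 end.

Lemma psq_mul_wvarX d :
  psq * wvar ^+ d = 'X_[zw_mnm 2 d] - 'X_[zw_mnm 1 d.+1] *+ 2 + 'X_[zw_mnm 0 d.+2].
Proof. by rewrite -!zvarX_wvarX /psq !expr0 !exprS; ring. Qed.

Lemma psq_mul_zvarX d :
  psq * zvar ^+ d = 'X_[zw_mnm d.+2 0] - 'X_[zw_mnm d.+1 1] *+ 2 + 'X_[zw_mnm d 2].
Proof. by rewrite -!zvarX_wvarX /psq !expr0 !exprS; ring. Qed.

Lemma hardy_ip_psq d :
  hardy_ip (psq * wvar ^+ d) (psq * zvar ^+ d) = psq_band d.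
Proof.
pose s := [:: zw_mnm 2 d; zw_mnm 1 d.+1; zw_mnm 0 d.+2].
rewrite psq_mul_wvarX psq_mul_zvarX (@hardy_ip_seq _ _ s); first last.
- move=> m; rewrite mcoeff_msupp !inE; apply: contraR.
  rewrite !negb_or => /and3P[/negbTE m1 /negbTE m2 /negbTE m3].
  by rewrite !(mcoeffD, mcoeffN, mcoeffMn, mcoeffX) ![_ == m]eq_sym m1 m2 m3 /= !(addr0, oppr0).
- by rewrite /s /= !inE !zw_mnm_eq.
rewrite {}/s !big_cons big_nil !(mcoeffD, mcoeffN, mcoeffMn, mcoeffX) !zw_mnm_eq !eqxx.
by case: d => [|[|[|d]]] /=; rewrite ?(rmorphD, rmorphB, rmorphN, rmorphMn, rmorph1, rmorph0); ring.
Qed.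

Lemma conj_psq_band d : (psq_band d)^* = psq_band d.
Proof. by case: d => [|[|[|d]]]; rewrite /= ?rmorphN ?rmorph_nat ?rmorph1 ?rmorph0. Qed.

Lemma Amat_psqE n (i j : 'I_n.+1) : Amat psq n i j = psq_band `|i - j|.
Proof.
by rewrite mxE; case: leqP => ij; rewrite hardy_ip_psq ?conj_psq_band; congr psq_band; lia.
Qed.

Lemma Amat_principal p n : row' ord_max (col' ord_max (Amat p n.+1)) = Amat p n.
Proof. by apply/matrixP => i j; rewrite !mxE !lift_max. Qed.

Lemma psq_band_far d : (3 <= d)%N -> psq_band d = 0.
Proof. by case: d => [|[|[|d]]]. Qed.

Lemma sum_psq_band (F : nat -> algC) i N : (i + 4 < N)%N ->
  \sum_(0 <= m < N) psq_band `|i.+2 - m| * F m =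
  F i - 4 * F i.+1 + 6 * F i.+2 - 4 * F i.+3 + F i.+4.
Proof.
move=> iN.
have far m : (m < i)%N || (i + 4 < m)%N -> psq_band `|i.+2 - m| * F m = 0.
  by move=> m_far; rewrite psq_band_far ?mul0r //; lia.
rewrite (@big_cat_nat _ _ _ i); [|lia..].
rewrite (@big_cat_nat _ _ _ i.+4.+1 i); [|lia..].
rewrite big1_seq => [|m]; last first.
  by rewrite mem_index_iota => /andP[_ /andP[_ mi]]; rewrite far ?mi.
rewrite /= [X in _ + (_ + X)]big1_seq => [|m]; last first.
  by rewrite mem_index_iota => /andP[_ /andP[im _]]; rewrite far //; apply/orP; right; lia.
rewrite add0r addr0.
do 5 (rewrite big_ltn; last lia).
rewrite big_geq // addr0.
have [-> -> -> -> ->] : [/\ `|i.+2 - i| = 2, `|i.+2 - i.+1| = 1, `|i.+2 - i.+2| = 0,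
  `|i.+2 - i.+3| = 1 & `|i.+2 - i.+4| = 2]%N by split; lia.
rewrite /=; ring.
Qed.

Definition cofactor_psq (n : nat) (x : algC) : algC :=
  - (((n + 2)%:R * (n + 3)%:R) / 12%:R) * (x + 1) * (x + 2) * (x - (n + 1)%:R).

Definition det_psq (n : nat) : algC :=
  (n + 2)%:R * (n + 3)%:R * (n + 3)%:R * (n + 4)%:R / 12%:R.

Lemma det_psq_neq0 n : det_psq n != 0.
Proof. by rewrite /det_psq !mulf_neq0 ?invr_eq0 ?pnatr_eq0 ?addn_eq0 ?andbF. Qed.

Lemma sum_psq_band_cofactor_psq n (i : nat) : (i <= n)%N ->
  \sum_(j < n.+1) psq_band `|i - j| * cofactor_psq n j%:R =
  if i == n then det_psq n else 0.
Proof.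
move=> le_in; pose F m := cofactor_psq n (m%:R - 2).
(* The five-term window around [i + 2] is a fourth difference of a cubic. *)
have window : \sum_(0 <= m < n.+4.+1) psq_band `|i.+2 - m| * F m = 0.
  by rewrite sum_psq_band; [rewrite /F /cofactor_psq; ring | lia].
have [F0 F1 Fn3 Fn4] : [/\ F 0 = 0, F 1 = 0, F n.+3 = 0 & F n.+4 = - det_psq n].
  by rewrite /F /cofactor_psq /det_psq; split; ring.
move: window; rewrite big_nat_recl // big_nat_recl // big_nat_recr // big_nat_recr //=.
rewrite big_mkord F0 F1 Fn3 Fn4 !mulr0 !add0r addr0 mulrN => /eqP; rewrite subr_eq0 => /eqP.
rewrite (eq_bigr (fun j : 'I_n.+1 => psq_band `|i - j| * cofactor_psq n j%:R)) => [->|j _].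
  case: eqP => [->|ne_in]; first by rewrite (_ : `|n.+2 - n.+4| = 2)%N /= ?mul1r //; lia.
  by rewrite psq_band_far ?mul0r //; lia.
rewrite /F -[j.+2]addn2 natrD addrK (_ : `|i.+2 - (j + 2)| = `|i - j|)%N //; lia.
Qed.

Lemma cofactor_Amat_psq_succ n : \det (Amat psq n) = det_psq n ->
  forall k : 'I_n.+2, cofactor (Amat psq n.+1) ord_max k = cofactor_psq n.+1 k%:R.
Proof.
move=> det_n; apply: (@cofactor_last_row_eq _ _ _ (fun j => cofactor_psq n.+1 j%:R)).
- by rewrite Amat_principal unitmxE unitfE det_n det_psq_neq0.
- move=> i; have le_in : (i <= n.+1)%N by rewrite leqW // -ltnS.
  have := @sum_psq_band_cofactor_psq n.+1 i le_in; rewrite ifN ?neq_ltn ?ltn_ord // => row_i.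
  rewrite -[RHS]row_i.
  by apply: eq_bigr => j _; rewrite Amat_psqE.
- by rewrite Amat_principal det_n /cofactor_psq /det_psq /=; ring.
Qed.

Lemma det_Amat_psq n : \det (Amat psq n) = det_psq n.
Proof.
elim: n => [|n det_n].
  by rewrite [Amat _ _]mx11_scalar det_scalar1 Amat_psqE distnn /det_psq /=; field.
have := @sum_psq_band_cofactor_psq n.+1 n.+1 (leqnn _); rewrite eqxx => <-.
rewrite (expand_det_row _ ord_max).
by apply: eq_bigr => j _; rewrite Amat_psqE cofactor_Amat_psq_succ.
Qed.

Theorem lemma3p4 (n k : nat) (hk : (k <= n)%N) :
  cofactor (Amat psq n) ord_max (inord k) =
  - (((n + 2)%:R * (n + 3)%:R) / 12%:R)
    * (k + 1)%:R * (k + 2)%:R * ((k%:R : algC) - (n + 1)%:R).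
Proof.
case: n hk => [|n] hk.
  by rewrite (_ : k = 0%N) ?ord1 /cofactor ?det_mx00 //=; [field | lia].
rewrite cofactor_Amat_psq_succ ?det_Amat_psq // inordK ?ltnS // /cofactor_psq; ring.
Qed.
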